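(* In a search game (as defined in the context), for a mixed outcome $f:\Omega\to[0,1]$ the following are equivalent: (i) $f$ can be induced by a lottery over pure strategy profiles; (ii) $f$ is compatible; (iii) $f$ can be generated by a fractional allocation, i.e., $f=f_\alpha$ for some fractional allocation $\alpha$.
   Context: A search game has a finite set of players $N=\{1,\ldots,n\}$, a finite set $\Omega$ of locations, for each player $i$ a partition $\Pi_i$ of $\Omega$ (with $\pi_i(\omega)$ the cell containing $\omega$) and a capacity $K_i\in\mathbb{N}$ (other ingredients such as prior, costs and rewards are irrelevant here). A pure strategy $s_i$ assigns to each cell $\pi_i\in\Pi_i$ a subset $s_i(\pi_i)\subseteq\pi_i$ with at most $K_i$ elements; a pure profile is $s=(s_1,\ldots,s_n)$, and $m_s(\omega)=\sum_{i\in N}\mathbf{1}_{\omega\in s_i(\pi_i(\omega))}$. A mixed outcome is a function $f:\Omega\to[0,1]$. A lottery over pure profiles (a probability distribution $\sigma$ over the finite set of pure profiles) induces the mixed outcome $f(\omega)=\sigma(\{s: m_s(\omega)\ge1\})$. A mixed outcome $f$ is compatible if for every $W\subseteq\Omega$: $\sum_{\omega\in W}f(\omega)\le\sum_{i\in N}K_i\cdot|\{\pi_i\in\Pi_i:\pi_i\cap W\ne\emptyset\}|$. A fractional allocation $\alpha=(\alpha_1,\ldots,\alpha_n)$ specifies a number $\alpha_i(\pi_i,\omega)\ge0$ for every player $i$, cell $\pi_i\in\Pi_i$ and $\omega\in\pi_i$, such that $\sum_{\omega\in\pi_i}\alpha_i(\pi_i,\omega)\le K_i$ for every cell $\pi_i$;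 it generates the mixed outcome $f_\alpha(\omega)=\min\big(1,\sum_{i\in N}\alpha_i(\pi_i(\omega),\omega)\big)$. *)

From HB Require Import structures.
From mathcomp Require Import all_boot all_order all_algebra.
From mathcomp Require Import reals.
Set Implicit Arguments. Unset Strict Implicit. Unset Printing Implicit Defensive.
Import Order.TTheory GRing.Theory Num.Theory.
Local Open Scope ring_scope.

(* Players are 'I_n, locations a finType Omega.  Player i's information
   partition is Pi i : {set {set Omega}} (with partition (Pi i) [set: Omega]),
   the cell containing w is pblock (Pi i) w, the capacity is K i. *)

Definition profile (n : nat) (Omega : finType) :=
  {ffun 'I_n -> {ffun {set Omega} -> {set Omega}}}.

(* s is a pure strategy profile: s_i(C) is a subset of C of size <= K_i
   for every cell C of Pi_i (values on non-cells are irrelevant). *)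
Definition pure_profile (n : nat) (Omega : finType)
  (Pi : 'I_n -> {set {set Omega}}) (K : 'I_n -> nat) (s : profile n Omega) :=
  forall i : 'I_n, forall C, C \in Pi i -> (s i C \subset C) /\ (#|s i C| <= K i)%N.

Definition searched (n : nat) (Omega : finType)
  (Pi : 'I_n -> {set {set Omega}}) (s : profile n Omega) (w : Omega) : bool :=
  [exists i : 'I_n, w \in s i (pblock (Pi i) w)].

Definition lottery (R : realType) (n : nat) (Omega : finType)
  (Pi : 'I_n -> {set {set Omega}}) (K : 'I_n -> nat)
  (sigma : {ffun profile n Omega -> R}) :=
  (forall s, 0 <= sigma s) /\ (\sum_s sigma s = 1) /\
  (forall s, sigma s != 0 -> pure_profile Pi K s).

Definition induced (R : realType) (n : nat) (Omega : finType)
  (Pi : 'I_n -> {set {set Omega}}) (sigma : {ffun profile n Omega -> R})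
  (w : Omega) : R :=
  \sum_(s | searched Pi s w) sigma s.

Definition compatible (R : realType) (n : nat) (Omega : finType)
  (Pi : 'I_n -> {set {set Omega}}) (K : 'I_n -> nat) (f : Omega -> R) :=
  forall W : {set Omega},
    \sum_(w in W) f w <=
    \sum_(i < n) (K i)%:R * #|[set C in Pi i | C :&: W != set0]|%:R.

Definition fractional_allocation (R : realType) (n : nat) (Omega : finType)
  (Pi : 'I_n -> {set {set Omega}}) (K : 'I_n -> nat)
  (alpha : 'I_n -> {set Omega} -> Omega -> R) :=
  forall i : 'I_n, forall C, C \in Pi i ->
    (forall w, w \in C -> 0 <= alpha i C w) /\
    \sum_(w in C) alpha i C w <= (K i)%:R.

Definition generated (R : realType) (n : nat) (Omega : finType)
  (Pi : 'I_n -> {set {set Omega}}) (alpha : 'I_n -> {set Omega} -> Omega -> R)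
  (w : Omega) : R :=
  Num.min 1 (\sum_(i < n) alpha i (pblock (Pi i) w) w).

From mathcomp Require Import all_boot all_order all_algebra.
From mathcomp Require Import reals.
From mathcomp Require Import ring lra zify.
Set Implicit Arguments. Unset Strict Implicit. Unset Printing Implicit Defensive.
Import Order.TTheory GRing.Theory Num.Theory.
Local Open Scope ring_scope.

(* A slot is a pair (i, C) of a player and one of its cells; it supplies K i
   units of search to the locations of C.  Compatibility of f is Hall's
   condition for the demand f against these supplies, and a fractional
   allocation is essentially a transport plan meeting the demand, so
   (ii) <-> (iii) is the supply-demand form of Hall's theorem.  It is proved by
   induction on the supports: ship along one edge the largest amount that
   preserves Hall's condition; then a demand or a supply is exhausted, or some
   set becomes tight and the instance splits along it.
   A lottery yields an allocation by crediting each searched location to the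
   first player searching it.  Conversely, a transport plan with demand f <= 1
   is a point of the polytope {x >= 0, degree <= K i at slots, degree <= 1 at
   locations} of a bipartite graph, and every such point is a convex
   combination of integral points, i.e. of pure profiles: a point with
   fractional coordinates can be moved both ways along a kernel vector of its
   tight constraints (which exists by double counting) until it reaches a
   smaller face. *)

Section FunctionOperations.
Variable R : numDomainType.

Lemma ler_sum_subset (T : finType) (X Y : {set T}) (F : T -> R) :
  (forall t, 0 <= F t) -> X \subset Y -> \sum_(t in X) F t <= \sum_(t in Y) F t.
Proof.
move=> F_ge0 /setIidPr XY; rewrite [leRHS](big_setID X) /= XY lerDl.
exact: sumr_ge0.
Qed.

Lemma sum_delta (T : finType) (a : T) (F : T -> R) :
  \sum_t (t == a)%:R * F t = F a.
Proof.
rewrite (bigD1 a) //= eqxx mul1r big1 ?addr0 // => t /negbTE ->.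
by rewrite mul0r.
Qed.

Lemma sum_delta_cond (T : finType) (P : pred T) (a : T) (r : R) :
  \sum_(t | P t) (t == a)%:R * r = if P a then r else 0.
Proof.
case: ifP => Pa.
  rewrite (bigD1 a) //= eqxx mul1r big1 ?addr0 // => t /andP[_ /negbTE ->].
  by rewrite mul0r.
apply: big1 => t Pt; case: eqP => [ta|_]; last by rewrite mul0r.
by rewrite -ta Pt in Pa.
Qed.

Definition restrict (T : finType) (X : {set T}) (g : T -> R) (t : T) : R :=
  if t \in X then g t else 0.

Lemma sum_restrict (T : finType) (Y X : {set T}) (g : T -> R) :
  \sum_(t in Y) restrict X g t = \sum_(t in Y :&: X) g t.
Proof. by rewrite -big_mkcondr; apply: eq_bigl => t; rewrite inE. Qed.

Lemma restrictUC (T : finType) (X : {set T}) (g : T -> R) t :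
  restrict X g t + restrict (~: X) g t = g t.
Proof. by rewrite /restrict inE; case: (t \in X); rewrite ?addr0 ?add0r. Qed.

Lemma restrict_ge0 (T : finType) (X : {set T}) (g : T -> R) :
  (forall t, 0 <= g t) -> forall t, 0 <= restrict X g t.
Proof. by move=> g_ge0 t; rewrite /restrict; case: ifP. Qed.

Lemma restrict_neq0 (T : finType) (X : {set T}) (g : T -> R) :
  forall t, restrict X g t != 0 -> g t != 0.
Proof. by move=> t; rewrite /restrict; case: ifP => //; rewrite eqxx. Qed.

Definition lower (T : eqType) (g : T -> R) (a : T) (r : R) (t : T) : R :=
  g t - (t == a)%:R * r.

Lemma lower_id (T : eqType) (g : T -> R) a r : lower g a r a = g a - r.
Proof. by rewrite /lower eqxx mul1r. Qed.

Lemma lower_ge0 (T : eqType) (g : T -> R) a r :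
  (forall t, 0 <= g t) -> r <= g a -> forall t, 0 <= lower g a r t.
Proof.
move=> g_ge0 r_le t; rewrite /lower subr_ge0.
by case: eqP => [->|_]; rewrite ?mul1r ?mul0r.
Qed.

Lemma lower_neq0 (T : eqType) (g : T -> R) a r :
  g a != 0 -> forall t, lower g a r t != 0 -> g t != 0.
Proof.
by move=> ga t; rewrite /lower; case: (t =P a) => [-> //|_]; rewrite mul0r subr0.
Qed.

Lemma sum_lower (T : finType) (X : {pred T}) (g : T -> R) a r :
  \sum_(t in X) lower g a r t = \sum_(t in X) g t - if a \in X then r else 0.
Proof. by rewrite sumrB sum_delta_cond. Qed.

Lemma card_support_le (T : finType) (g h : T -> R) :
  (forall t, g t != 0 -> h t != 0) -> (#|support g| <= #|support h|)%N.
Proof. by move=> gh; apply/subset_leq_card/subsetP => t; apply: gh. Qed.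

Lemma card_support_lt (T : finType) (g h : T -> R) t0 :
  (forall t, g t != 0 -> h t != 0) -> g t0 = 0 -> h t0 != 0 ->
  (#|support g| < #|support h|)%N.
Proof.
move=> gh gt0 ht0; apply/proper_card/properP; split.
  by apply/subsetP => t; apply: gh.
by exists t0; rewrite !inE ?gt0 ?eqxx.
Qed.

End FunctionOperations.

Lemma bigmin_attained (R : realDomainType) (I : finType) (P : pred I) (F : I -> R) r :
  let m := \big[Num.min/r]_(i | P i) F i in m = r \/ exists2 i, P i & m = F i.
Proof.
elim/big_rec: _ => [|i m Pi IHm]; first by left.
rewrite minEle; case: ifP => _; first by right; exists i.
by case: IHm => [->|[j Pj ->]]; [left|right; exists j].
Qed.

Section Transport.
Variable R : realFieldType.
Variables (S T : finType) (adj : S -> T -> bool).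

Definition neighbours (W : {set T}) : {set S} := [set s | [exists w in W, adj s w]].

Lemma mem_neighbours s w (W : {set T}) : w \in W -> adj s w -> s \in neighbours W.
Proof. by move=> wW sw; rewrite inE; apply/existsP; exists w; rewrite wW. Qed.

Lemma neighboursS (W X : {set T}) : W \subset X -> neighbours W \subset neighbours X.
Proof.
move=> /subsetP WX; apply/subsetP => s; rewrite inE => /existsP[w /andP[wW sw]].
exact: mem_neighbours (WX w wW) sw.
Qed.

Lemma neighboursU (W X : {set T}) : neighbours (W :|: X) = neighbours W :|: neighbours X.
Proof.
apply/setP => s; rewrite !inE; apply/existsP/orP => [[w]|].
  by rewrite inE => /andP[/orP[] wWX sw]; [left|right];
    apply/existsP; exists w; rewrite wWX.
by case=> /existsP[w /andP[wWX sw]]; exists w; rewrite inE wWX ?orbT.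
Qed.

Definition hall_condition (f : T -> R) (c : S -> R) :=
  forall W : {set T}, \sum_(w in W) f w <= \sum_(s in neighbours W) c s.

Definition slack (f : T -> R) (c : S -> R) (W : {set T}) :=
  \sum_(s in neighbours W) c s - \sum_(w in W) f w.

Definition transport (f : T -> R) (c : S -> R) (x : S -> T -> R) :=
  [/\ forall s w, 0 <= x s w, forall s w, ~~ adj s w -> x s w = 0,
      forall w, \sum_s x s w = f w & forall s, \sum_w x s w <= c s].

Lemma transport_hall_condition f c x :
  (forall s w, 0 <= x s w) -> (forall s w, ~~ adj s w -> x s w = 0) ->
  (forall w, f w <= \sum_s x s w) -> (forall s, \sum_w x s w <= c s) ->
  hall_condition f c.
Proof.
move=> x_ge0 x_adj f_le c_ge W.
apply: le_trans (ler_sum _ (fun w _ => f_le w)) _.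
rewrite exchange_big /= (bigID [in neighbours W]) /= [X in _ + X]big1 ?addr0.
  apply: ler_sum => s _; apply: le_trans (c_ge s).
  by rewrite [leRHS](bigID [in W]) /= lerDl sumr_ge0.
move=> s sNW; apply: big1 => w wW; apply: x_adj; apply: contra sNW.
exact: mem_neighbours.
Qed.

Lemma transport0 f c : (forall w, f w = 0) -> (forall s, 0 <= c s) ->
  transport f c (fun _ _ => 0).
Proof. by move=> f0 c_ge0; split=> // [w|s]; rewrite big1. Qed.

Lemma transport_add f c f1 c1 x1 f2 c2 x2 :
  transport f1 c1 x1 -> transport f2 c2 x2 ->
  (forall w, f w = f1 w + f2 w) -> (forall s, c1 s + c2 s <= c s) ->
  transport f c (fun s w => x1 s w + x2 s w).
Proof.
move=> [x1_ge0 x1_adj x1_f x1_c] [x2_ge0 x2_adj x2_f x2_c] f12 c12; split.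
- by move=> s w; rewrite addr_ge0.
- by move=> s w sw; rewrite x1_adj ?x2_adj ?addr0.
- by move=> w; rewrite big_split /= x1_f x2_f f12.
- by move=> s; rewrite big_split /=; apply: le_trans (c12 s); apply: lerD.
Qed.

Lemma transport_lower f c s w0 t x : adj s w0 -> 0 <= t ->
  transport (lower f w0 t) (lower c s t) x ->
  transport f c (fun s' w => x s' w + (s' == s)%:R * ((w == w0)%:R * t)).
Proof.
move=> sw0 t_ge0 tr.
have point : transport (fun w => (w == w0)%:R * t) (fun s' => (s' == s)%:R * t)
                       (fun s' w => (s' == s)%:R * ((w == w0)%:R * t)).
  split.
  - by move=> s' w; rewrite !mulr_ge0.
  - move=> s' w; apply: contraNeq; rewrite mulf_eq0 negb_or => /andP[].
    rewrite pnatr_eq0 eqb0 negbK => /eqP ->.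
    by rewrite mulf_eq0 negb_or pnatr_eq0 eqb0 negbK => /andP[/eqP ->].
  - by move=> w; rewrite sum_delta.
  - by move=> s'; rewrite -mulr_sumr sum_delta.
by apply: transport_add tr point _ _ => [w|s']; rewrite /lower subrK.
Qed.

Lemma transport_restrict_supply f c x (W : {set T}) :
  transport (restrict W f) c x ->
  transport (restrict W f) (restrict (neighbours W) c) x.
Proof.
move=> [x_ge0 x_adj x_f x_c]; split=> // s; rewrite /restrict.
case: ifP => [_|sNW]; first exact: x_c.
rewrite big1 // => w _; case wW: (w \in W).
  exact: x_adj (contraFN (mem_neighbours wW) sNW).
by apply: (psumr_eq0P (P := xpredT) (fun s' _ => x_ge0 s' w)); rewrite ?x_f /restrict ?wW.
Qed.

Lemma transport_glue f c (W : {set T}) x1 x2 :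
  transport (restrict W f) c x1 ->
  transport (restrict (~: W) f) (restrict (~: neighbours W) c) x2 ->
  transport f c (fun s w => x1 s w + x2 s w).
Proof.
move=> /transport_restrict_supply tr1 tr2.
apply: transport_add tr1 tr2 _ _ => [w|s]; first by rewrite restrictUC.
by rewrite restrictUC.
Qed.

Lemma hall_condition_restrict f c (W : {set T}) : (forall s, 0 <= c s) ->
  hall_condition f c -> hall_condition (restrict W f) c.
Proof.
move=> c_ge0 hall X; rewrite sum_restrict; apply: le_trans (hall _) _.
exact/ler_sum_subset/neighboursS/subsetIl.
Qed.

Lemma hall_condition_tight f c (W : {set T}) :
  hall_condition f c -> \sum_(w in W) f w = \sum_(s in neighbours W) c s ->
  hall_condition (restrict (~: W) f) (restrict (~: neighbours W) c).
Proof.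
move=> hall tight X; rewrite !sum_restrict -!setDE.
have := hall (W :|: X); rewrite neighboursU.
rewrite (big_setID W) [leRHS](big_setID (neighbours W)) /=.
by rewrite !setUK !setDUl !setDv !set0U tight lerD2l.
Qed.

Lemma hall_condition_lower f c s w0 t :
  hall_condition f c -> adj s w0 ->
  (forall U : {set T}, w0 \notin U -> s \in neighbours U -> t <= slack f c U) ->
  hall_condition (lower f w0 t) (lower c s t).
Proof.
move=> hall sw0 t_slack X; rewrite !sum_lower.
have [w0X|w0X] := ifPn; first by rewrite (mem_neighbours w0X sw0) lerB.
rewrite subr0; case: ifPn => sNX; last by rewrite subr0.
by rewrite lerBrDr addrC -lerBrDr; exact: t_slack.
Qed.

End Transport.

Section HallTheorem.
Variable R : realFieldType.
Variables (S T : finType) (adj : S -> T -> bool).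

Definition transport_size (f : T -> R) (c : S -> R) := (#|support f| + #|support c|)%N.

Lemma hall_supplier (f : T -> R) c w0 : (forall s, 0 <= c s) ->
  hall_condition adj f c -> 0 < f w0 -> exists2 s, adj s w0 & 0 < c s.
Proof.
move=> c_ge0 hall fw0.
have : 0 < \sum_(s in neighbours adj [set w0]) c s.
  by apply: lt_le_trans fw0 _; have := hall [set w0]; rewrite big_set1.
move=> /lt0r_neq0/eqP/(psumr_neq0P (fun s _ => c_ge0 s))[s /andP[]].
by rewrite inE => /existsP[w /andP[/set1P -> sw0]] cs; exists s.
Qed.

(* Lowering the demand at w0 and the supply at s by t lowers the slack of
   exactly those U that tighten. *)
Lemma hall_max_shipment (f : T -> R) (c : S -> R) s w0 :
  (forall w, 0 <= f w) -> (forall s, 0 <= c s) -> hall_condition adj f c ->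
  let tightens (U : {set T}) := (w0 \notin U) && (s \in neighbours adj U) in
  exists t, [/\ 0 <= t, t <= f w0, t <= c s,
    forall U, tightens U -> t <= slack adj f c U &
    [\/ t = f w0, t = c s | exists2 U, tightens U & t = slack adj f c U]].
Proof.
move=> f_ge0 c_ge0 hall tightens.
pose t := \big[Num.min/Num.min (f w0) (c s)]_(U | tightens U) slack adj f c U.
have t_le_fc : t <= Num.min (f w0) (c s) by apply: bigmin_le_id.
exists t; split.
- by apply: le_bigmin => [|U _]; rewrite ?le_min ?f_ge0 ?c_ge0 // subr_ge0.
- by apply: le_trans t_le_fc _; rewrite ge_min lexx.
- by apply: le_trans t_le_fc _; rewrite ge_min lexx orbT.
- by move=> U; apply: bigmin_le_cond.
rewrite /t.
case: (bigmin_attained tightens (slack adj f c) (Num.min (f w0) (c s))) => [->|?].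
  by rewrite minEle; case: ifP; [constructor 1|constructor 2].
by constructor 3.
Qed.

Lemma transport_size_lower (f : T -> R) (c : S -> R) w0 s t :
  f w0 != 0 -> c s != 0 ->
  (transport_size (lower f w0 t) (lower c s t) <= transport_size f c)%N.
Proof. by move=> fw0 cs; apply: leq_add; apply: card_support_le; apply: lower_neq0. Qed.

Lemma transport_size_lower_lt (f : T -> R) (c : S -> R) w0 s t :
  f w0 != 0 -> c s != 0 -> (t == f w0) || (t == c s) ->
  (transport_size (lower f w0 t) (lower c s t) < transport_size f c)%N.
Proof.
move=> fw0 cs /orP[/eqP tf|/eqP tc].
  rewrite -addSn leq_add ?(card_support_le (lower_neq0 (r := t) cs)) //.
  apply: (card_support_lt (t0 := w0) (lower_neq0 (r := t) fw0)) => //.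
  by rewrite lower_id tf subrr.
rewrite -addnS leq_add ?(card_support_le (lower_neq0 (r := t) fw0)) //.
apply: (card_support_lt (t0 := s) (lower_neq0 (r := t) cs)) => //.
by rewrite lower_id tc subrr.
Qed.

Lemma transport_split_tight (f : T -> R) (c : S -> R) (U : {set T}) w0 s :
  (forall f' c', (transport_size f' c' < transport_size f c)%N ->
     (forall w, 0 <= f' w) -> (forall s, 0 <= c' s) -> hall_condition adj f' c' ->
     exists x, transport adj f' c' x) ->
  (forall w, 0 <= f w) -> (forall s, 0 <= c s) -> hall_condition adj f c ->
  \sum_(w in U) f w = \sum_(s in neighbours adj U) c s ->
  w0 \notin U -> f w0 != 0 -> s \in neighbours adj U -> c s != 0 ->
  exists x, transport adj f c x.
Proof.
move=> IH f_ge0 c_ge0 hall tight w0U fw0 sNU cs.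
have [x1 tr1] : exists x, transport adj (restrict U f) c x.
  apply: IH; [|exact: restrict_ge0|by []|exact: hall_condition_restrict].
  rewrite -addSn leq_add //.
  apply: (card_support_lt (t0 := w0) (@restrict_neq0 _ _ _ _)) => //.
  by rewrite /restrict (negbTE w0U).
have [x2 tr2] : exists x,
    transport adj (restrict (~: U) f) (restrict (~: neighbours adj U) c) x.
  apply: IH; [|exact: restrict_ge0..|exact: hall_condition_tight].
  rewrite -addnS leq_add //; first exact: card_support_le (@restrict_neq0 _ _ _ _).
  apply: (card_support_lt (t0 := s) (@restrict_neq0 _ _ _ _)) => //.
  by rewrite /restrict inE sNU.
by exists (fun s' w => x1 s' w + x2 s' w); apply: transport_glue tr1 tr2.
Qed.

Theorem hall_transport (f : T -> R) (c : S -> R) :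
  (forall w, 0 <= f w) -> (forall s, 0 <= c s) -> hall_condition adj f c ->
  exists x, transport adj f c x.
Proof.
have [m] := ubnP (transport_size f c).
elim: m f c => // m IH f c lt_fc f_ge0 c_ge0 hall.
have {}IH f' c' : (transport_size f' c' < transport_size f c)%N ->
    (forall w, 0 <= f' w) -> (forall s, 0 <= c' s) -> hall_condition adj f' c' ->
    exists x, transport adj f' c' x.
  by move=> lt; apply: IH; apply: leq_trans lt _.
have [w0 fw0|f0] := pickP (fun w => f w != 0); last first.
  by exists (fun _ _ => 0); apply: transport0 => // w; apply/eqP/negbFE.
have {}fw0 : 0 < f w0 by rewrite lt0r fw0 f_ge0.
have [s sw0 cs] := hall_supplier c_ge0 hall fw0.
have [t [t_ge0 t_le_f t_le_c t_slack t_cases]] :=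
  hall_max_shipment s w0 f_ge0 c_ge0 hall.
suff [x tr] : exists x, transport adj (lower f w0 t) (lower c s t) x.
  by eexists; apply: transport_lower sw0 t_ge0 tr.
have f'_ge0 := lower_ge0 f_ge0 t_le_f; have c'_ge0 := lower_ge0 c_ge0 t_le_c.
have hall' : hall_condition adj (lower f w0 t) (lower c s t).
  by apply: hall_condition_lower => // U w0U sNU; apply: t_slack; rewrite w0U.
have [fw0' cs'] := (lt0r_neq0 fw0, lt0r_neq0 cs).
have [tfc|tfc] := boolP ((t == f w0) || (t == c s)).
  by apply: IH => //; apply: transport_size_lower_lt.
have [U /andP[w0U sNU] tU] : exists2 U : {set T},
    (w0 \notin U) && (s \in neighbours adj U) & t = slack adj f c U.
  by case: t_cases tfc => [->|->|//]; rewrite eqxx ?orbT.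
move: tfc; rewrite negb_or => /andP[tf tc].
apply: (transport_split_tight (U := U) (w0 := w0) (s := s)) => //.
- move=> f'' c'' lt; apply: IH; apply: leq_trans lt _.
  exact: transport_size_lower.
- by rewrite !sum_lower (negbTE w0U) sNU tU /slack subr0 opprB addrC subrK.
- by rewrite lower_id subr_eq0 eq_sym.
- by rewrite lower_id subr_eq0 eq_sym.
Qed.

End HallTheorem.

Lemma exists_kernel_vector (F : fieldType) (I J : finType) (Eqs : {set I})
    (D : {set J}) (M : I -> J -> F) :
  (#|Eqs| < #|D|)%N ->
  exists d : J -> F, [/\ forall j, j \notin D -> d j = 0, exists j, d j != 0
    & forall i, i \in Eqs -> \sum_j M i j * d j = 0].
Proof.
move=> lt_ED; have [j0 j0D] : exists j0, j0 \in D.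
  by apply/card_gt0P; apply: leq_ltn_trans lt_ED.
pose A : 'M[F]_(#|D|, #|Eqs|) := \matrix_(a, b) M (enum_val b) (enum_val a).
have : kermx A != 0.
  by rewrite -mxrank_eq0 mxrank_ker -lt0n subn_gt0 (leq_ltn_trans (rank_leq_col A)).
case/matrix0Pn => r [a ra]; pose u := row r (kermx A).
have uA : u *m A = 0 by rewrite -row_mul mulmx_ker row0.
pose d j := if j \in D then u 0 (enum_rank_in j0D j) else 0.
exists d; split.
- by move=> j /negbTE jD; rewrite /d jD.
- by exists (enum_val a); rewrite /d enum_valP enum_valK_in mxE.
move=> i iE; rewrite (bigID [in D]) /= [X in _ + X]big1 ?addr0; last first.
  by move=> j /negbTE jD; rewrite /d jD mulr0.
rewrite big_enum_val /=; transitivity ((u *m A) 0 (enum_rank_in iE i)).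
  rewrite mxE; apply: eq_bigr => b _.
  by rewrite /d enum_valP enum_valK_in /A !mxE enum_rankK_in // mulrC.
by rewrite uA mxE.
Qed.

Section AssignmentPolytope.
Variable R : realFieldType.
Variables (E A B : finType) (tail : E -> A) (head : E -> B) (cap : A -> nat).

Definition incident (v : A + B) (e : E) : bool :=
  match v with inl a => tail e == a | inr b => head e == b end.

Definition capacity (v : A + B) : nat := if v is inl a then cap a else 1.

Definition degree (x : E -> R) (v : A + B) : R := \sum_(e | incident v e) x e.

Definition feasible (x : E -> R) :=
  (forall e, 0 <= x e) /\ forall v, degree x v <= (capacity v)%:R.

Definition fractional (x : E -> R) : {set E} := [set e | 0 < x e < 1].

Definition slack_vertices (x : E -> R) : {set A + B} :=
  [set v | degree x v != (capacity v)%:R].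

Definition fractionality (x : E -> R) := (#|fractional x| + #|slack_vertices x|)%N.

Definition integral_decomposition (x : E -> R) (lam : {ffun {ffun E -> bool} -> R}) :=
  [/\ forall y, 0 <= lam y, \sum_y lam y = 1,
      forall y : {ffun E -> bool}, lam y != 0 -> feasible (fun e => (y e)%:R)
    & forall e, x e = \sum_(y : {ffun E -> bool} | y e) lam y].

Lemma degreeD x d b v : degree (fun e => x e + b * d e) v = degree x v + b * degree d v.
Proof. by rewrite /degree big_split mulr_sumr. Qed.

Lemma sum_degree_tail d : \sum_a degree d (inl a) = \sum_e d e.
Proof. by rewrite [RHS](partition_big tail xpredT). Qed.

Lemma sum_degree_head d : \sum_b degree d (inr b) = \sum_e d e.
Proof. by rewrite [RHS](partition_big head xpredT). Qed.

Lemma card_incident (F : {set E}) :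
  (\sum_v #|[set e in F | incident v e]| = 2 * #|F|)%N.
Proof.
under eq_bigr do rewrite -sum1_card.
rewrite (exchange_big_dep [in F]) /= => [|v e _]; last by rewrite inE => /andP[].
rewrite -sum1_card big_distrr /=; apply: eq_bigr => e eF.
rewrite (eq_bigl (incident^~ e)) => [|v]; last by rewrite inE eF.
rewrite big_sumType /= (big_pred1 (tail e)) => [|a]; last exact: eq_sym.
by rewrite (big_pred1 (head e)) => [//|b]; exact: eq_sym.
Qed.

Lemma feasible_le1 x e : feasible x -> x e <= 1.
Proof.
move=> [x_ge0 x_deg]; apply: le_trans (x_deg (inr (head e))).
by rewrite /degree (bigD1 e) //= lerDl sumr_ge0.
Qed.

Lemma feasible_nonfractional x e :
  feasible x -> e \notin fractional x -> x e = (x e == 1)%:R.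
Proof.
move=> x_feas; have [x_ge0 _] := x_feas.
rewrite inE negb_and -!leNgt => /orP[] xe.
  have -> : x e = 0 by apply/eqP; rewrite eq_le xe x_ge0.
  by rewrite eq_sym oner_eq0.
have -> : x e = 1 by apply/eqP; rewrite eq_le xe feasible_le1.
by rewrite eqxx.
Qed.

Lemma eq_feasible x x' : x =1 x' -> feasible x -> feasible x'.
Proof.
move=> xx' [x_ge0 x_deg]; split=> [e|v]; first by rewrite -xx'.
by rewrite /degree -(eq_bigr _ (fun e _ => xx' e)); apply: x_deg.
Qed.

Lemma integral_decomposition_integral x : feasible x -> fractional x = set0 ->
  exists lam, integral_decomposition x lam.
Proof.
move=> x_feas Fx0; pose y0 : {ffun E -> bool} := [ffun e => x e == 1].
have x_y0 e : x e = (y0 e)%:R.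
  by rewrite ffunE; apply: feasible_nonfractional; rewrite ?Fx0 ?inE.
pose lam : {ffun {ffun E -> bool} -> R} := [ffun y => (y == y0)%:R].
have lamE (P : pred {ffun E -> bool}) : \sum_(y | P y) lam y = if P y0 then 1 else 0.
  by rewrite -sum_delta_cond; apply: eq_bigr => y _; rewrite ffunE mulr1.
exists lam; split.
- by move=> y; rewrite ffunE.
- by rewrite lamE.
- move=> y; rewrite ffunE pnatr_eq0 eqb0 negbK => /eqP ->.
  exact: eq_feasible x_y0 x_feas.
- by move=> e; rewrite lamE x_y0; case: (y0 e).
Qed.

Lemma integral_decomposition_convex x x1 x2 lam1 lam2 l :
  integral_decomposition x1 lam1 -> integral_decomposition x2 lam2 -> 0 <= l <= 1 ->
  (forall e, x e = l * x1 e + (1 - l) * x2 e) ->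
  integral_decomposition x [ffun y => l * lam1 y + (1 - l) * lam2 y].
Proof.
move=> [ge1 sum1 feas1 x1E] [ge2 sum2 feas2 x2E] /andP[l_ge0 l_le1] xE.
have lamE (P : pred {ffun E -> bool}) :
    \sum_(y | P y) [ffun y => l * lam1 y + (1 - l) * lam2 y] y =
    l * \sum_(y | P y) lam1 y + (1 - l) * \sum_(y | P y) lam2 y.
  by rewrite (eq_bigr _ (fun y _ => ffunE _ y)) big_split -!mulr_sumr.
split.
- by move=> y; rewrite ffunE addr_ge0 // mulr_ge0 // subr_ge0.
- by rewrite lamE sum1 sum2 !mulr1 addrC subrK.
- move=> y; rewrite ffunE; have [l1|/feas1 //] := eqVneq (lam1 y) 0.
  have [l2|/feas2 //] := eqVneq (lam2 y) 0.
  by rewrite l1 l2 !mulr0 addr0 eqxx.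
- by move=> e; rewrite lamE -x1E -x2E xE.
Qed.

Definition fractional_at (x : E -> R) (v : A + B) : {set E} :=
  [set e in fractional x | incident v e].

Definition touched_tight (x : E -> R) : {set A + B} :=
  [set v | (v \notin slack_vertices x) && (fractional_at x v != set0)].

Definition touched_slack (x : E -> R) : {set A + B} :=
  [set v | (v \in slack_vertices x) && (fractional_at x v != set0)].

(* The degree at a tight vertex is an integer, so it cannot carry exactly one
   fractional edge. *)
Lemma card_fractional_at_tight x v : feasible x -> v \notin slack_vertices x ->
  fractional_at x v != set0 -> (1 < #|fractional_at x v|)%N.
Proof.
move=> x_feas v_tight /set0Pn[e1]; rewrite inE => /andP[e1F ve1].
rewrite ltnNge; apply/negP => /card_le1_eqP at_most_one.
have others e : incident v e && (e != e1) -> x e = (x e == 1)%:R.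
  move=> /andP[ve ne]; apply: feasible_nonfractional => //; apply: contra ne => eF.
  by apply/eqP; apply: at_most_one; rewrite inE ?eF ?e1F ?ve ?ve1.
pose k := (\sum_(e | incident v e && (e != e1)) (x e == 1%R : nat))%N.
have xk : x e1 + k%:R = (capacity v)%:R.
  move: v_tight; rewrite inE negbK => /eqP <-.
  rewrite /degree (bigD1 e1) //= natr_sum; congr (_ + _).
  by apply: eq_bigr => e /others/esym.
move: e1F; rewrite inE => /andP[x_gt0 x_lt1].
have : (k < capacity v)%N by rewrite -(ltr_nat R) -xk ltrDr.
have : (capacity v < k.+1)%N by rewrite -(ltr_nat R) -xk -addn1 natrD addrC ltrD2l.
lia.
Qed.

Lemma kernel_degree d v : \sum_e (incident v e)%:R * d e = degree d v.
Proof.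
rewrite /degree [RHS]big_mkcond; apply: eq_bigr => e _.
by case: (incident v e); rewrite ?mul1r ?mul0r.
Qed.

Lemma degree_untouched x d v : (forall e, e \notin fractional x -> d e = 0) ->
  fractional_at x v = set0 -> degree d v = 0.
Proof.
move=> d_supp at0; apply: big1 => e ve; apply: d_supp; apply: contraT => /negbNE eF.
by have := in_set0 e; rewrite -at0 inE eF ve.
Qed.

(* Double counting of the pairs (v, e) with e fractional and incident to v:
   every fractional edge has two ends, every touched tight vertex at least two
   fractional edges. *)
Lemma card_touched x : feasible x ->
  (#|touched_tight x| * 2 + #|touched_slack x| <= #|fractional x| * 2)%N.
Proof.
move=> x_feas; rewrite -sum_nat_const -sum1_card mulnC -card_incident.
rewrite [leqRHS](bigID [in touched_tight x]) /= leq_add //.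
  by apply: leq_sum => v; rewrite inE => /andP[]; apply: card_fractional_at_tight.
rewrite [leqRHS](bigID [in touched_slack x]) /=.
rewrite [X in (_ <= X + _)%N](eq_bigl [in touched_slack x]) => [|v].
  apply: leq_trans (leq_addr _ _); apply: leq_sum => v.
  by rewrite inE card_gt0 => /andP[].
by rewrite !inE negbK; case: (degree x v == _); case: (fractional_at x v == set0).
Qed.

Lemma balanced_direction x : feasible x -> fractional x != set0 ->
  exists d : E -> R, [/\ forall e, e \notin fractional x -> d e = 0,
    exists e, d e != 0 & forall v, v \notin slack_vertices x -> degree d v = 0].
Proof.
move=> x_feas /set0Pn[e0 e0F]; have count := card_touched x_feas.
set T := touched_tight x in count *.
have [ltT|geT] := ltnP #|T| #|fractional x|.
  have [d [d_supp d_nz d_ker]] :=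
    exists_kernel_vector (fun v e => (incident v e)%:R : R) ltT.
  exists d; split => // v v_tight.
  have [at0|at_nz] := eqVneq (fractional_at x v) set0.
    exact: degree_untouched d_supp at0.
  by rewrite -kernel_degree d_ker // inE v_tight.
(* Now every touched vertex is tight, and the equation at v0 follows from the
   others: both sides of the bipartite graph have total degree \sum_e d e. *)
have N0 : touched_slack x = set0 by apply/eqP; rewrite -cards_eq0; lia.
have touchedP v : fractional_at x v != set0 -> v \in T.
  move=> at_nz; rewrite inE at_nz andbT; apply/negP => vs.
  by have := in_set0 v; rewrite -N0 inE vs at_nz.
pose v0 : A + B := inr (head e0).
have v0T : v0 \in T by apply/touchedP/set0Pn; exists e0; rewrite inE e0F /=.
have ltT : (#|T :\ v0| < #|fractional x|)%N.
  move: count; rewrite (cardsD1 v0 T) v0T add1n => /(leq_trans (leq_addr _ _)).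
  by rewrite leq_pmul2r.
have [d [d_supp d_nz d_ker]] :=
  exists_kernel_vector (fun v e => (incident v e)%:R : R) ltT.
have d_deg v : v != v0 -> degree d v = 0.
  move=> vv0; have [at0|at_nz] := eqVneq (fractional_at x v) set0.
    exact: degree_untouched d_supp at0.
  by rewrite -kernel_degree d_ker // in_setD1 vv0 touchedP.
exists d; split => // v _; have [->|/d_deg //] := eqVneq v v0.
have := sum_degree_head d.
rewrite -sum_degree_tail (bigD1 (head e0)) //= !big1 ?addr0 // => [a _|b bh].
  by apply: d_deg; apply/eqP.
by apply: d_deg; apply: contra bh => /eqP [->].
Qed.

Lemma feasible_perturb x d b : feasible x -> 0 <= b ->
  (forall v, v \notin slack_vertices x -> degree d v = 0) ->
  (forall e, d e < 0 -> b * - d e <= x e) ->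
  (forall v, v \in slack_vertices x -> 0 < degree d v ->
     b * degree d v <= (capacity v)%:R - degree x v) ->
  feasible (fun e => x e + b * d e).
Proof.
move=> [x_ge0 x_deg] b_ge0 d_tight d_edge d_vertex; split => [e|v].
  have [de_lt0|de_ge0] := ltP (d e) 0.
    by have := d_edge e de_lt0; rewrite mulrN; lra.
  by rewrite addr_ge0 ?mulr_ge0.
rewrite degreeD; have [vs|v_tight] := boolP (v \in slack_vertices x); last first.
  by rewrite d_tight // mulr0 addr0.
have [dv_gt0|dv_le0] := ltP 0 (degree d v); first by rewrite -lerBrDl d_vertex.
by rewrite -[leRHS]addr0 lerD // mulr_ge0_le0.
Qed.

Lemma fractionality_perturb x d b :
  (forall e, e \notin fractional x -> d e = 0) ->
  (forall v, v \notin slack_vertices x -> degree d v = 0) ->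
  let x' e := x e + b * d e in
  (exists2 e, e \in fractional x & e \notin fractional x') \/
  (exists2 v, v \in slack_vertices x & v \notin slack_vertices x') ->
  (fractionality x' < fractionality x)%N.
Proof.
move=> d_supp d_tight x' witness.
have sub_F : fractional x' \subset fractional x.
  apply/subsetP => e; apply: contraTT => eF.
  by rewrite inE /x' d_supp // mulr0 addr0; rewrite inE in eF.
have sub_S : slack_vertices x' \subset slack_vertices x.
  apply/subsetP => v; apply: contraTT => vs.
  by rewrite inE negbK degreeD d_tight // mulr0 addr0; rewrite inE negbK in vs.
rewrite /fractionality; case: witness => [[e eF eF']|[v vs vs']].
  rewrite -addSn leq_add ?subset_leq_card // proper_card //.
  by apply/properP; split => //; exists e.
rewrite -addnS leq_add ?subset_leq_card // proper_card //.
by apply/properP; split => //; exists v.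
Qed.

Lemma exists_feasible_step x d : feasible x ->
  (forall e, e \notin fractional x -> d e = 0) -> (exists e, d e != 0) ->
  (forall v, v \notin slack_vertices x -> degree d v = 0) ->
  exists2 b, 0 < b & feasible (fun e => x e + b * d e) /\
    (fractionality (fun e => x e + b * d e)%R < fractionality x)%N.
Proof.
move=> x_feas d_supp [e1 de1] d_tight; have [x_ge0 x_deg] := x_feas.
have dF e : d e != 0 -> e \in fractional x.
  by apply: contraR => /d_supp ->; rewrite eqxx.
pose active (z : E + (A + B)) := match z with
  | inl e => d e != 0
  | inr v => (v \in slack_vertices x) && (0 < degree d v) end.
(* step z is the step length at which the constraint z (a bound on an edge
   or the capacity of a vertex) becomes tight. *)
pose step (z : E + (A + B)) := match z with
  | inl e => if d e < 0 then x e / - d e else (1 - x e) / d e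
  | inr v => ((capacity v)%:R - degree x v) / degree d v end.
have step_gt0 z : active z -> 0 < step z.
  case: z => [e /= de|v /= /andP[vs dv]]; last first.
    by rewrite divr_gt0 // subr_gt0 lt_neqAle x_deg andbT; rewrite inE in vs.
  move: (dF e de); rewrite inE => /andP[x_gt0 x_lt1].
  case: (ltP (d e) 0) => [dlt|dge]; first by rewrite divr_gt0 // oppr_gt0.
  by rewrite divr_gt0 ?subr_gt0 // lt_neqAle eq_sym de dge.
case: (arg_minP step (de1 : active (inl e1))) => z0 az0 min_z0.
exists (step z0); first exact: step_gt0.
split.
  apply: feasible_perturb => // [|e de_lt0|v vs dv_gt0].
  - exact/ltW/step_gt0.
  - have := min_z0 (inl e) (negbT (lt_eqF de_lt0)).
    by rewrite /= de_lt0 ler_pdivlMr ?oppr_gt0.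
  - by have := min_z0 (inr v) (introT andP (conj vs dv_gt0)); rewrite /= ler_pdivlMr.
apply: fractionality_perturb => //; case: z0 az0 {min_z0} => [e de|v /andP[vs dv]] /=.
  left; exists e; first exact: dF.
  rewrite inE negb_and -!leNgt; case: (ltP (d e) 0) => dlt.
    by rewrite invrN mulrN mulNr divfK // subrr lexx.
  by rewrite divfK // addrC subrK lexx orbT.
right; exists v => //.
by rewrite inE negbK degreeD (divfK (lt0r_neq0 dv)) addrC subrK.
Qed.

Theorem feasible_integral_decomposition x : feasible x ->
  exists lam, integral_decomposition x lam.
Proof.
have [m] := ubnP (fractionality x); elim: m x => // m IH x lt_x x_feas.
have [F0|F_nz] := eqVneq (fractional x) set0.
  exact: integral_decomposition_integral.
have [d [d_supp d_nz d_tight]] := balanced_direction x_feas F_nz.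
have [b1 b1_gt0 [feas1 lt1]] := exists_feasible_step x_feas d_supp d_nz d_tight.
have [b2 b2_gt0 [feas2 lt2]] : exists2 b, 0 < b &
    feasible (fun e => x e + b * - d e) /\
    (fractionality (fun e => x e + b * - d e)%R < fractionality x)%N.
  apply: exists_feasible_step => //.
  - by move=> e /d_supp ->; rewrite oppr0.
  - by case: d_nz => e de; exists e; rewrite oppr_eq0.
  - by move=> v /d_tight dv; rewrite /degree sumrN -/(degree d v) dv oppr0.
have [lam1 dec1] := IH _ (leq_trans lt1 lt_x) feas1.
have [lam2 dec2] := IH _ (leq_trans lt2 lt_x) feas2.
(* x = l (x + b1 d) + (1 - l) (x - b2 d) for l = b2 / (b1 + b2). *)
exists [ffun y => b2 / (b1 + b2) * lam1 y + (1 - b2 / (b1 + b2)) * lam2 y].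
have b12_gt0 : 0 < b1 + b2 by rewrite addr_gt0.
apply: integral_decomposition_convex dec1 dec2 _ _ => [|e].
  by rewrite divr_ge0 ?ler_pdivrMr ?mul1r ?lerDr ?ltW.
by rewrite /=; field; rewrite lt0r_neq0.
Qed.

End AssignmentPolytope.

Section SearchGame.
Variables (R : realType) (n : nat) (Omega : finType).
Variables (Pi : 'I_n -> {set {set Omega}}) (K : 'I_n -> nat).
Hypothesis hPi : forall i, partition (Pi i) [set: Omega].

Local Notation slot := ('I_n * {set Omega})%type.

Lemma mem_cell i w : w \in pblock (Pi i) w.
Proof. by case/and3P: (hPi i) => /eqP cover_Pi _ _; rewrite mem_pblock cover_Pi inE. Qed.

Lemma cell_in i w : pblock (Pi i) w \in Pi i.
Proof.
by case/and3P: (hPi i) => /eqP cover_Pi _ _; rewrite pblock_mem // cover_Pi inE.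
Qed.

Lemma pblock_eqE i C w : C \in Pi i -> (pblock (Pi i) w == C) = (w \in C).
Proof.
move=> CPi; apply/eqP/idP => [<-|wC]; first exact: mem_cell.
by case/and3P: (hPi i) => _ triv_Pi _; apply: def_pblock.
Qed.

Definition occupies (p : slot) (w : Omega) : bool := pblock (Pi p.1) w == p.2.

(* The edges of the assignment graph are the pairs (i, w): player i may search
   w, using the slot of the cell of i containing w. *)
Definition cell_slot (e : 'I_n * Omega) : slot := (e.1, pblock (Pi e.1) e.2).

Local Notation slot_capacity := (fun p : slot => K p.1).
Local Notation supply := (fun p : slot => (K p.1)%:R : R).

Lemma sum_slots (F : slot -> R) : \sum_p F p = \sum_i \sum_C F (i, C).
Proof. by rewrite pair_big; apply: eq_bigr => -[]. Qed.

Lemma sum_occupied (x : slot -> Omega -> R) w :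
  (forall p, ~~ occupies p w -> x p w = 0) ->
  \sum_p x p w = \sum_i x (i, pblock (Pi i) w) w.
Proof.
move=> x0; rewrite sum_slots; apply: eq_bigr => i _.
rewrite (bigD1 (pblock (Pi i) w)) //= big1 ?addr0 // => C C_w.
by apply: x0; rewrite /occupies eq_sym.
Qed.

Lemma compatible_hall_condition (f : Omega -> R) :
  compatible Pi K f <-> hall_condition occupies f supply.
Proof.
suff capE W : \sum_(p in neighbours occupies W) (K p.1)%:R =
    \sum_i (K i)%:R * #|[set C in Pi i | C :&: W != set0]|%:R :> R.
  by split=> compat W; have := compat W; rewrite capE.
rewrite big_mkcond sum_slots; apply: eq_bigr => i _; rewrite -big_mkcond /=.
rewrite (eq_bigl [in [set C in Pi i | C :&: W != set0]]) ?sumr_const ?mulr_natr // => C.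
rewrite !inE /occupies /=; apply/existsP/andP => [[w /andP[wW /eqP <-]]|[CPi /set0Pn[w]]].
  by split; [exact: cell_in | apply/set0Pn; exists w; rewrite inE mem_cell].
by rewrite inE => /andP[wC wW]; exists w; rewrite wW pblock_eqE.
Qed.

Lemma degree_slot (z : 'I_n * Omega -> R) i C :
  degree cell_slot snd z (inl (i, C)) = \sum_(w | pblock (Pi i) w == C) z (i, w).
Proof.
transitivity (\sum_(e | (e.1 == i) && (pblock (Pi e.1) e.2 == C)) z (e.1, e.2)).
  by apply: eq_big => -[j w] //=; rewrite xpair_eqE.
rewrite -(pair_big_dep (pred1 i) (fun j w => pblock (Pi j) w == C) (fun j w => z (j, w))).
by rewrite big_pred1_eq.
Qed.

Lemma degree_location (z : 'I_n * Omega -> R) w :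
  degree cell_slot snd z (inr w) = \sum_i z (i, w).
Proof.
transitivity (\sum_(e | xpredT e.1 && (e.2 == w)) z (e.1, e.2)).
  by apply: eq_big => -[].
rewrite -(pair_big_dep xpredT (fun _ w' => w' == w) (fun i w' => z (i, w'))).
by apply: eq_bigr => i _; rewrite big_pred1_eq.
Qed.

Definition first_searcher (s : profile n Omega) (w : Omega) : option 'I_n :=
  [pick i | w \in s i (pblock (Pi i) w)].

Lemma first_searcherP s w i :
  first_searcher s w = Some i -> w \in s i (pblock (Pi i) w).
Proof. by rewrite /first_searcher; case: pickP => // j sj [<-]. Qed.

Lemma lottery_allocation (f : Omega -> R) sigma : (forall w, f w <= 1) ->
  lottery Pi K sigma -> (forall w, f w = induced Pi sigma w) ->
  exists alpha, fractional_allocation Pi K alpha /\ forall w, f w = generated Pi alpha w.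
Proof.
move=> f_le1 [sigma_ge0 [sigma_sum sigma_pure]] f_ind.
(* alpha i C w is the probability that i is the first player to search w;
   these events partition the event that w is searched. *)
pose alpha (i : 'I_n) (C : {set Omega}) w :=
  \sum_(s | first_searcher s w == Some i) sigma s.
exists alpha; split.
  move=> i C CPi; split=> [w _|]; first exact: sumr_ge0.
  apply: (@le_trans _ _ (\sum_s sigma s * (K i)%:R)); last first.
    by rewrite -mulr_suml sigma_sum mul1r.
  rewrite (exchange_big_dep xpredT) //=; apply: ler_sum => s _.
  have [->|nz] := eqVneq (sigma s) 0; first by rewrite big1 ?mul0r.
  have [sub card_le] := sigma_pure s nz i C CPi.
  rewrite (eq_bigl [in [set w in C | first_searcher s w == Some i]]) => [|w]; last first.
    by rewrite inE.
  rewrite sumr_const mulr_natr; apply: ler_wpMn2l => //; apply: leq_trans card_le.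
  apply/subset_leq_card/subsetP => w; rewrite inE => /andP[wC].
  move=> /eqP/first_searcherP; rewrite -(def_pblock _ CPi wC) //.
  by case/and3P: (hPi i).
move=> w; rewrite /generated; suff -> : \sum_i alpha i (pblock (Pi i) w) w = f w.
  exact/esym/min_idPr.
rewrite f_ind /induced /alpha; under eq_bigr do rewrite big_mkcond.
rewrite exchange_big [RHS]big_mkcond /=; apply: eq_bigr => s _.
rewrite /searched /first_searcher; case: pickP => [j sj|none].
  rewrite -big_mkcond (eq_bigl (pred1 j)) ?big_pred1_eq => [|i] //.
  by case: existsP => // -[]; exists j.
case: existsP => [[j sj]|_]; first by rewrite none in sj.
by rewrite big1.
Qed.

Lemma allocation_compatible (f : Omega -> R) alpha :
  fractional_allocation Pi K alpha -> (forall w, f w = generated Pi alpha w) ->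
  compatible Pi K f.
Proof.
move=> alloc f_gen; apply/compatible_hall_condition.
have alpha_ge0 i w : 0 <= alpha i (pblock (Pi i) w) w.
  by have [alpha_ge0 _] := alloc i _ (cell_in i w); apply/alpha_ge0/mem_cell.
apply: (transport_hall_condition (x := fun p w => (occupies p w)%:R * alpha p.1 p.2 w)).
- move=> [i C] w; rewrite /occupies /=.
  by case: eqP => [<-|_]; rewrite ?mul1r ?mul0r.
- by move=> p w /negbTE ->; rewrite mul0r.
- move=> w; rewrite (sum_occupied (x := fun p w => (occupies p w)%:R * alpha p.1 p.2 w)).
    under eq_bigr do rewrite /occupies /= eqxx mul1r.
    by rewrite f_gen ge_min lexx orbT.
  by move=> p /negbTE ->; rewrite mul0r.
move=> [i C] /=; have [CPi|CPi] := boolP (C \in Pi i).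
  have [_ alpha_le] := alloc i C CPi; apply: le_trans alpha_le.
  rewrite [leRHS]big_mkcond /=; apply: ler_sum => w _.
  by rewrite /occupies /= pblock_eqE //; case: (w \in C); rewrite ?mul1r ?mul0r.
rewrite big1 // => w _; rewrite /occupies /=; case: eqP => [Cw|_]; last by rewrite mul0r.
by have := cell_in i w; rewrite Cw (negbTE CPi).
Qed.

Lemma compatible_transport (f : Omega -> R) : (forall w, 0 <= f w) ->
  compatible Pi K f -> exists x, transport occupies f supply x.
Proof. by move=> f_ge0 /compatible_hall_condition; apply: hall_transport. Qed.

Lemma transport_allocation (f : Omega -> R) x : (forall w, f w <= 1) ->
  transport occupies f supply x ->
  exists alpha, fractional_allocation Pi K alpha /\ forall w, f w = generated Pi alpha w.
Proof.
move=> f_le1 [x_ge0 x_occ x_f x_cap]; exists (fun i C w => x (i, C) w); split.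
  move=> i C _; split=> [w _|]; first exact: x_ge0.
  apply: le_trans (x_cap (i, C)).
  by rewrite [leRHS](bigID [in C]) /= lerDl sumr_ge0.
move=> w; rewrite /generated -(sum_occupied (fun p => x_occ p w)) x_f.
exact/esym/min_idPr.
Qed.

Definition profile_of (y : {ffun 'I_n * Omega -> bool}) : profile n Omega :=
  [ffun i => [ffun C => [set w | (pblock (Pi i) w == C) && y (i, w)]]].

Lemma searched_profile_of (y : {ffun 'I_n * Omega -> bool}) w :
  searched Pi (profile_of y) w = [exists i, y (i, w)].
Proof. by apply: eq_existsb => i; rewrite !ffunE inE eqxx. Qed.

Lemma pure_profile_of (y : {ffun 'I_n * Omega -> bool}) :
  feasible cell_slot snd slot_capacity (fun e => (y e)%:R : R) ->
  pure_profile Pi K (profile_of y).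
Proof.
move=> [_ y_deg] i C CPi; rewrite !ffunE; split.
  by apply/subsetP => w; rewrite inE pblock_eqE // => /andP[].
rewrite -(ler_nat R); apply: le_trans (y_deg (inl (i, C))).
rewrite degree_slot -sum1_card natr_sum [leLHS]big_mkcond [leRHS]big_mkcond /=.
by apply: ler_sum => w _; rewrite inE; case: (_ == C); case: (y (i, w)).
Qed.

Lemma searchers_le1 (y : {ffun 'I_n * Omega -> bool}) w :
  feasible cell_slot snd slot_capacity (fun e => (y e)%:R : R) ->
  \sum_i (y (i, w))%:R = ([exists i, y (i, w)])%:R :> R.
Proof.
move=> [_ y_deg]; have := y_deg (inr w); rewrite degree_location -natr_sum ler_nat.
case: existsP => [[i yi] le1|none _]; last first.
  by rewrite big1 // => i _; case: (boolP (y (i, w))) => // yi; case: none; exists i.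
by apply/eqP; rewrite eqr_nat eqn_leq le1 (bigD1 i) //= yi.
Qed.

Lemma lottery_of_decomposition (x : 'I_n * Omega -> R) lam :
  integral_decomposition cell_slot snd slot_capacity x lam ->
  exists sigma, lottery Pi K sigma /\
    forall w, induced Pi sigma w = degree cell_slot snd x (inr w).
Proof.
move=> [lam_ge0 lam_sum lam_feas xE].
pose sigma : {ffun profile n Omega -> R} :=
  [ffun s => \sum_(y | profile_of y == s) lam y].
have sigmaE (P : pred (profile n Omega)) :
    \sum_(s | P s) sigma s = \sum_(y | P (profile_of y)) lam y.
  rewrite (partition_big profile_of P) //=; apply: eq_bigr => s Ps; rewrite ffunE.
  by apply: eq_bigl => y; case: eqP => [->|]; rewrite ?Ps ?andbF.
exists sigma; split; [split; [|split]|].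
- by move=> s; rewrite ffunE sumr_ge0.
- by rewrite sigmaE.
- move=> s; rewrite ffunE => /eqP/(psumr_neq0P (fun y _ => lam_ge0 y))[y /andP[/eqP <-]].
  by move=> /lt0r_neq0/lam_feas/pure_profile_of.
move=> w; rewrite /induced sigmaE degree_location.
under [RHS]eq_bigr do rewrite xE big_mkcond.
rewrite exchange_big [LHS]big_mkcond; apply: eq_bigr => y _ /=.
rewrite searched_profile_of; have [->|/lam_feas y_feas] := eqVneq (lam y) 0.
  by rewrite if_same big1 // => i _; case: (y _).
rewrite (eq_bigr (fun i => (y (i, w))%:R * lam y)) => [|i _]; last first.
  by case: (y _); rewrite ?mul1r ?mul0r.
by rewrite -mulr_suml searchers_le1 //; case: existsP; rewrite ?mul1r ?mul0r.
Qed.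

Lemma transport_lottery (f : Omega -> R) x : (forall w, f w <= 1) ->
  transport occupies f supply x ->
  exists sigma, lottery Pi K sigma /\ forall w, f w = induced Pi sigma w.
Proof.
move=> f_le1 [x_ge0 x_occ x_f x_cap].
have f_sum w : \sum_i x (i, pblock (Pi i) w) w = f w.
  by rewrite -(sum_occupied (fun p => x_occ p w)) x_f.
pose z (e : 'I_n * Omega) := x (cell_slot e) e.2.
have z_feas : feasible cell_slot snd slot_capacity z.
  split=> [e|[[i C]|w]]; first exact: x_ge0.
    rewrite degree_slot (eq_bigr (fun w => x (i, C) w)) => [|w /eqP <-] //.
    apply: le_trans (x_cap (i, C)).
    by rewrite [leRHS](bigID (fun w => pblock (Pi i) w == C)) /= lerDl sumr_ge0.
  by rewrite degree_location f_sum.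
have [lam dec] := feasible_integral_decomposition z_feas.
have [sigma [lot ind]] := lottery_of_decomposition dec.
by exists sigma; split => // w; rewrite ind degree_location f_sum.
Qed.

End SearchGame.

Theorem proposition2 (R : realType) (n : nat) (Omega : finType)
  (Pi : 'I_n -> {set {set Omega}}) (K : 'I_n -> nat)
  (hPi : forall i : 'I_n, partition (Pi i) [set: Omega])
  (f : Omega -> R) (hf : forall w, 0 <= f w <= 1) :
  ((exists sigma : {ffun profile n Omega -> R},
      lottery Pi K sigma /\ forall w, f w = induced Pi sigma w)
   <-> compatible Pi K f)
  /\
  (compatible Pi K f
   <-> (exists alpha : 'I_n -> {set Omega} -> Omega -> R,
          fractional_allocation Pi K alpha /\ forall w, f w = generated Pi alpha w)).
Proof.
have f_ge0 w : 0 <= f w by case/andP: (hf w).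
have f_le1 w : f w <= 1 by case/andP: (hf w).
split; split.
- move=> [sigma [lot /(lottery_allocation hPi f_le1 lot)[alpha [alloc]]]].
  by move/(allocation_compatible hPi alloc).
- by move/(compatible_transport hPi f_ge0) => [x /(transport_lottery hPi f_le1)].
- by move/(compatible_transport hPi f_ge0) => [x /(transport_allocation f_le1)].
- by move=> [alpha [alloc /(allocation_compatible hPi alloc)]].
Qed.
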